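(* Let $\mathcal{D}$ be a distribution on $\mathbb{S}^{n-1}$, $f(x)=\bigwedge_{i=1}^k\mathrm{sign}(w_i\cdot x)$ with unit vectors $w_i$, $\varepsilon,\rho\in(0,1/2)$, and suppose $\Pr_{\mathbf{x}\sim\mathcal{D}_-}[w_1\cdot\mathbf{x}<-\rho]>0$. Let $\mathcal{K}\subseteq\mathbb{R}^{n+1}$ be a bounded convex body and for $x\in\mathbb{R}^n$ let $\mathcal{K}_x=\mathcal{K}\cap\{w:w\cdot(x,1)<0\}$. Let $\mathcal{D}_-^{(1)}$ denote $\mathcal{D}_-$ conditioned on $w_1\cdot\mathbf{x}<-\rho$. Then \[\Pr_{\mathbf{x}\sim\mathcal{D}_-}[w_1\cdot\mathbf{x}<-\rho]\cdot\mathbb{E}_{\mathbf{x}\sim\mathcal{D}_-^{(1)}}\left[\left|\mathcal{K}_{\mathbf{x}}^{\mathrm{bad}}\right|\right]\le\frac{100n}{\varepsilon^2}\cdot M_+^{-1}\log(M_+)\cdot\left|\mathcal{K}^{\mathrm{bad}}\right|.\]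
   Context: $f(x)=1$ iff $w_i\cdot x>0$ for all $i$, else $-1$; $\mathcal{D}_-$ is $\mathcal{D}$ conditioned on $f(\mathbf{x})=-1$; $|\cdot|$ is Lebesgue volume. Set $M_-=\sqrt{n\log(9/\rho)/\log(2k\varepsilon^{-1})}$ and $M_+=\left(200k\cdot\frac{n^2M_-}{\varepsilon^4}\right)^2\cdot2^{\sqrt{n\log(9/\rho)\log(2k\varepsilon^{-1})}}$. For any convex body $\mathcal{K}\subseteq\mathbb{R}^{n+1}$, $\mathcal{K}^{\mathrm{good}}=\{w\in\mathcal{K}:\Pr_{\mathbf{x}\sim\mathcal{D}_-}[w\cdot(\mathbf{x},1)<0]\ge\frac{100n}{\varepsilon^2}\cdot\frac{\log(M_+)}{M_+}\}$ and $\mathcal{K}^{\mathrm{bad}}=\mathcal{K}\setminus\mathcal{K}^{\mathrm{good}}$ (applied to $\mathcal{K}_x$ as well). *)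

From HB Require Import structures.
From mathcomp Require Import all_boot all_order all_algebra.
From mathcomp Require Import all_classical all_reals all_analysis.
Set Implicit Arguments. Unset Strict Implicit. Unset Printing Implicit Defensive.
Import Order.TTheory GRing.Theory Num.Theory.
Import numFieldNormedType.Exports.
Local Open Scope classical_set_scope.
Local Open Scope ring_scope.

(* Points of R^m are represented as m-tuples of reals; m.-tuple R carries
   the product (= Borel) sigma-algebra of the library. *)

Section Defs.
Variable R : realType.

Definition dotp (m : nat) (u v : m.-tuple R) : R :=
  \sum_(i < m) tnth u i * tnth v i.

Definition ext1 (n : nat) (x : n.-tuple R) : n.+1.-tuple R :=
  [tuple (if (i < n)%N then nth 0 (x : seq R) i else 1) | i < n.+1].

Definition sphere (n : nat) : set (n.-tuple R) := [set x | dotp x x = 1].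

Definition fAND (n k : nat) (w : 'I_k -> n.-tuple R) (x : n.-tuple R) : R :=
  if [forall i, 0 < dotp (w i) x] then 1 else -1.

Definition condPr (T : measurableType (measure_tuple_display default_measure_display))
  (P : probability T R) (B A : set T) : R :=
  fine (P (A `&` B)) / fine (P B).

Definition condE (T : measurableType (measure_tuple_display default_measure_display))
  (P : probability T R) (A : set T) (g : T -> \bar R) : \bar R :=
  ((fine (P A))^-1)%:E * (\int[P]_(x in A) g x)%E.

(* Lebesgue measure on R^m : assigns to every half-open box its volume
   (this characterizes Lebesgue measure on the Borel sets uniquely) *)
Definition is_lebesgue (m : nat) (lam : set (m.-tuple R) -> \bar R) : Prop :=
  forall a b : m.-tuple R, (forall i, tnth a i <= tnth b i) ->
    lam [set x | forall i, tnth a i <= tnth x i < tnth b i] =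
    (\prod_(i < m) (tnth b i - tnth a i))%:E.

Definition convex_set (m : nat) (K : set (m.-tuple R)) : Prop :=
  forall u v t, K u -> K v -> 0 <= t <= 1 ->
    K [tuple t * tnth u i + (1 - t) * tnth v i | i < m].

Definition bounded_set (m : nat) (K : set (m.-tuple R)) : Prop :=
  exists M : R, forall w, K w -> forall i, `|tnth w i| <= M.

Definition closed_set (m : nat) (K : set (m.-tuple R)) : Prop :=
  forall (u : nat -> m.-tuple R) (w : m.-tuple R),
    (forall j, K (u j)) -> (forall i, (fun j => tnth (u j) i) @ \oo --> tnth w i) ->
    K w.

Definition nonempty_interior (m : nat) (K : set (m.-tuple R)) : Prop :=
  exists (c : m.-tuple R) (r : R), 0 < r /\
    forall w, (forall i, `|tnth w i - tnth c i| < r) -> K w.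

Definition convex_body (m : nat) (K : set (m.-tuple R)) : Prop :=
  [/\ convex_set K, bounded_set K, closed_set K & nonempty_interior K].

Definition Mminus (n k : nat) (eps rho : R) : R :=
  Num.sqrt (n%:R * ln (9 / rho) / ln (2 * k%:R * eps^-1)).

Definition Mplus (n k : nat) (eps rho : R) : R :=
  (200 * k%:R * (n%:R ^+ 2 * Mminus n k eps rho / eps ^+ 4)) ^+ 2 *
  powR 2 (Num.sqrt (n%:R * ln (9 / rho) * ln (2 * k%:R * eps^-1))).

Definition thr (n k : nat) (eps rho : R) : R :=
  100 * n%:R / eps ^+ 2 * (ln (Mplus n k eps rho) / Mplus n k eps rho).

(* D_- event: f(x) = -1 *)
Definition negEv (n k : nat) (w : 'I_k -> n.-tuple R) : set (n.-tuple R) :=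
  [set x | fAND w x = -1].

Definition Kbad (n k : nat) (w : 'I_k -> n.-tuple R) (eps rho : R)
  (P : probability (n.-tuple R) R) (K : set (n.+1.-tuple R)) : set (n.+1.-tuple R) :=
  [set v | K v /\ condPr P (negEv w) [set x | dotp v (ext1 x) < 0] < thr n k eps rho].

Definition Ksub (n : nat) (K : set (n.+1.-tuple R)) (x : n.-tuple R) : set (n.+1.-tuple R) :=
  K `&` [set v | dotp v (ext1 x) < 0].

End Defs.

From HB Require Import structures.
From mathcomp Require Import all_boot all_order all_algebra.
From mathcomp Require Import all_classical all_reals all_analysis.
From mathcomp Require Import measurable_realfun.
From mathcomp Require Import ring zify.
Set Implicit Arguments. Unset Strict Implicit. Unset Printing Implicit Defensive.
Import Order.TTheory GRing.Theory Num.Theory.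
Import numFieldNormedType.Exports.
Local Open Scope classical_set_scope.
Local Open Scope ring_scope.

(* Let N = P(D_-).  Unfolding the conditional quantities, the left-hand side is
   N^-1 times the integral of |K_x^bad| over D_- /\ E1.  For x in D_-, K_x^bad is
   the section at x of the set of pairs (v, x) with v in K^bad, x in D_- and
   v.(x,1) < 0.  Enlarging the domain of integration to all x and exchanging the
   integrals (Tonelli) gives the integral over v in K^bad of
   P(x in D_-, v.(x,1) < 0), which is below thr * N by the very definition of
   K^bad.  Only the measurability of K (it is closed) and the sigma-finiteness
   of Lebesgue measure are used. *)

Section measurable_sets.
Context d (T : measurableType d) (R : realType).

Lemma measurable_ltr_cst (f : T -> R) (c : R) :
  measurable_fun setT f -> measurable [set x | f x < c].
Proof. by move=> mf; rewrite -[X in measurable X]setTI -preimage_itvNyo; exact: mf. Qed.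

Lemma measurable_gtr_cst (f : T -> R) (c : R) :
  measurable_fun setT f -> measurable [set x | c < f x].
Proof. by move=> mf; rewrite -[X in measurable X]setTI -preimage_itvoy; exact: mf. Qed.

Lemma measurable_forall_ord m (A : 'I_m -> set T) :
  (forall i, measurable (A i)) -> measurable [set x | forall i, A i x].
Proof.
move=> mA; have -> : [set x | forall i, A i x] = \bigcap_(i in [set: 'I_m]) A i.
  by apply/seteqP; split=> x /= Ax i //; exact: Ax.
by apply: fin_bigcap_measurable => //; exact: finite_finset.
Qed.

End measurable_sets.

Section tuples.
Context (R : realType).

Lemma measurable_tnth_ext1 n (i : 'I_n.+1) :
  measurable_fun setT (fun x : n.-tuple R => tnth (ext1 x) i).
Proof.
rewrite /ext1; under eq_fun do rewrite tnth_mktuple.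
case: (ltnP i n) => [lt_in|_]; last exact: measurable_cst.
have -> : (fun x : n.-tuple R => nth 0 (x : seq R) i) = fun x => tnth x (Ordinal lt_in).
  by apply/funext => x; rewrite (tnth_nth 0).
exact: measurable_tnth.
Qed.

Lemma measurable_dotp n (u : n.-tuple R) : measurable_fun setT (dotp u).
Proof.
apply: measurable_sum => i.
by apply: measurable_funM; [exact: measurable_cst | exact: measurable_tnth].
Qed.

Lemma measurable_dotp_ext1 n :
  measurable_fun setT (fun p : n.+1.-tuple R * n.-tuple R => dotp p.1 (ext1 p.2)).
Proof.
apply: measurable_sum => i; apply: measurable_funM.
  exact: (measurableT_comp (measurable_tnth i) measurable_fst).
exact: (measurableT_comp (measurable_tnth_ext1 i) measurable_snd).
Qed.

Definition box m (c : m.-tuple R) (r : R) : set (m.-tuple R) :=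
  [set x | forall i, `|tnth x i - tnth c i| < r].

Lemma measurable_box m (c : m.-tuple R) r : measurable (box c r).
Proof.
apply: measurable_forall_ord => i; apply: measurable_ltr_cst.
apply: measurableT_comp => //; apply: measurable_funB => //.
exact: measurable_tnth.
Qed.

Lemma closed_set_boxC m (K : set (m.-tuple R)) v :
  closed_set K -> ~ K v -> exists j : nat, box v j.+1%:R^-1 `<=` ~` K.
Proof.
move=> cK; apply: contra_notP => /forallNP noj.
have /choice[u Ku] : forall j : nat, exists u, K u /\ box v j.+1%:R^-1 u.
  move=> j; have /existsNP[u /not_implyP[vu /contrapT]] := noj j.
  by exists u.
apply: (cK u) => [j|i]; first by case: (Ku j).
apply/cvgrPdist_lt => e e_gt0; near=> j.
rewrite distrC; apply: lt_trans ((Ku j).2 i) _.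
by near: j; exact: (near_infty_natSinv_lt (PosNum e_gt0)).
Unshelve. all: by end_near.
Qed.

Lemma exists_rat_box m (v : m.-tuple R) e : 0 < e ->
  exists c : m.-tuple rat, box (map_tuple ratr c) e v.
Proof.
move=> e_gt0; have /choice[q vq] : forall i : 'I_m, exists q : rat,
    `|tnth v i - ratr q| < e.
  move=> i; have /rat_in_itvoo[q] : tnth v i - e < tnth v i + e.
    by rewrite ltrD2l gtrN.
  rewrite in_itv /= => /andP[lo hi]; exists q.
  by rewrite ltr_distl ltrBlDr hi /= -ltrBlDr.
by exists [tuple q i | i < m] => i; rewrite tnth_map tnth_mktuple.
Qed.

Lemma measurable_open_box m (U : set (m.-tuple R)) :
  (forall v, U v -> exists j : nat, box v j.+1%:R^-1 `<=` U) -> measurable U.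
Proof.
move=> Uopen.
pose B (p : m.-tuple rat * nat) := box (map_tuple ratr p.1) p.2.+1%:R^-1.
have -> : U = \bigcup_(p in [set p | B p `<=` U]) B p.
  apply/seteqP; split => [v Uv|v [p BU Bv]]; last exact: BU.
  have [J vJU] := Uopen v Uv.
  (* a rational box of radius 1/(2J+2) containing v lies in the box of radius 1/(J+1) around v *)
  have [c vc] : exists c, box (map_tuple ratr c) (2 * J).+2%:R^-1 v.
    exact: exists_rat_box.
  exists (c, (2 * J).+1) => //= x cx; apply: vJU => i.
  rewrite (_ : J.+1%:R^-1 = (2 * J).+2%:R^-1 *+ 2); last first.
    have -> : (2 * J).+2 = (2 * J.+1)%N by lia.
    by rewrite natrM -mulr_natr; field.
  rewrite mulr2n; apply: le_lt_trans (ler_distD (tnth (map_tuple ratr c) i) _ _) _.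
  by apply: ltrD; [exact: cx | rewrite distrC; exact: vc].
rewrite bigcup_mkcond; apply: countable_bigcupT_measurable => // p.
by case: ifP => _; [exact: measurable_box | exact: measurable0].
Qed.

Lemma closed_set_measurable m (K : set (m.-tuple R)) : closed_set K -> measurable K.
Proof.
move=> cK; rewrite -[K]setCK; apply: measurableC; apply: measurable_open_box => v.
exact: closed_set_boxC.
Qed.

Lemma is_lebesgue_sigma_finite m (lam : {measure set (m.-tuple R) -> \bar R}) :
  is_lebesgue lam -> sigma_finite setT lam.
Proof.
move=> lamE; pose a j := nseq_tuple m (- j%:R : R); pose b j := nseq_tuple m (j%:R : R).
exists (fun j => [set x | forall i, tnth (a j) i <= tnth x i < tnth (b j) i]).
  apply/seteqP; split => x // _.
  pose s := \sum_(i < m) `|tnth x i|.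
  exists (Num.truncn s).+1 => // i; rewrite !tnth_nseq.
  have : `|tnth x i| < (Num.truncn s).+1%:R.
    apply: le_lt_trans (truncnS_gt s).
    by rewrite /s (bigD1 i) //= lerDl sumr_ge0.
  by rewrite ltr_norml => /andP[/ltW -> ->].
move=> j; split.
  apply: measurable_forall_ord => i.
  have := @measurable_tnth _ R m i measurableT _ (measurable_itv `[tnth (a j) i, tnth (b j) i[).
  by rewrite setTI; congr measurable; apply/seteqP; split => x; rewrite /= in_itv.
rewrite lamE ?ltry // => i.
by rewrite !tnth_nseq (@le_trans _ _ 0) ?oppr_le0.
Qed.

End tuples.

Section sigma_finite_fubini.
Context d1 d2 (T1 : measurableType d1) (T2 : measurableType d2) (R : realType).
Variables (lam : {measure set T1 -> \bar R}) (P : {sigma_finite_measure set T2 -> \bar R}).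
Hypothesis lam_sigma_finite : sigma_finite setT lam.
Local Open Scope ereal_scope.

Let lam_sfinite := isSFinite.Build _ _ _ lam (sfinite_measure_sigma_finite lam_sigma_finite).
Let lam_sigma := isSigmaFinite.Build _ _ _ lam lam_sigma_finite.
Let lam' := HB.pack_for (SigmaFiniteMeasure.type T1 R) (Measure.sort lam) lam_sfinite lam_sigma.

Lemma measurable_fun_ysection_sigma_finite (A : set (T1 * T2)) : measurable A ->
  measurable_fun setT (fun x => lam (ysection A x)).
Proof. exact: (measurable_fun_ysection lam'). Qed.

Lemma indic_fubini_tonelli_sigma_finite (A : set (T1 * T2)) : measurable A ->
  \int[lam]_v P (xsection A v) = \int[P]_x lam (ysection A x).
Proof.
move=> mA; have := indic_fubini_tonelli lam' P mA.
by rewrite (indic_fubini_tonelli_FE P mA) (indic_fubini_tonelli_GE lam' mA).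
Qed.

Lemma integral_ysection_le (A : set (T1 * T2)) (S : set T1) (c : R) :
  measurable A -> measurable S -> A `<=` S `*` setT ->
  (forall v, S v -> P (xsection A v) <= c%:E) ->
  \int[P]_x lam (ysection A x) <= c%:E * lam S.
Proof.
move=> mA mS AS Ple; rewrite -indic_fubini_tonelli_sigma_finite //.
have xA0 v : ~ S v -> xsection A v = set0.
  by move=> Sv; apply/seteqP; split => x //; rewrite /xsection /= inE => /AS[].
apply: (@le_trans _ _ (\int[lam]_v (c * \1_S v)%:E)).
  apply: ge0_le_integral => //.
  - exact: measurable_fun_xsection.
  - by apply/measurable_EFinP/measurable_funM => //; exact: measurable_indic.
  move=> v _; have [Sv|Sv] := pselect (S v).
    by rewrite indicE mem_set // mulr1; exact: Ple.
  by rewrite xA0 // measure0 indicE memNset // mulr0.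
rewrite (integralZl_indic _ (fun _ => S)) // ?integral_indic // ?setIT //.
move=> c_lt0; apply/seteqP; split => // v Sv.
by have := le_trans (measure_ge0 P _) (Ple v Sv); rewrite lee_fin leNgt c_lt0.
Qed.

End sigma_finite_fubini.

Section conditional_probability.
Context (R : realType) (T : measurableType (measure_tuple_display default_measure_display)).
Variable P : probability T R.

Lemma condPr_gt0_Pr (B A : set T) : 0 < condPr P B A -> 0 < fine (P B).
Proof.
move=> Pr_gt0; rewrite lt_neqAle fine_ge0 ?measure_ge0 // andbT eq_sym.
by apply: contraTneq Pr_gt0 => PB0; rewrite /condPr PB0 invr0 mulr0 ltxx.
Qed.

Lemma condPr_mul_condE (B A : set T) (g : T -> \bar R) : 0 < condPr P B A ->
  ((condPr P B A)%:E * condE P (B `&` A) g =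
   ((fine (P B))^-1)%:E * \int[P]_(x in B `&` A) g x)%E.
Proof.
move=> Pr_gt0; have PB_gt0 := condPr_gt0_Pr Pr_gt0.
have PBA_neq0 : fine (P (B `&` A)) != 0.
  by apply: contraTneq Pr_gt0 => PBA0; rewrite /condPr setIC PBA0 mul0r ltxx.
rewrite /condE /condPr setIC muleA -EFinM; congr (_%:E * _)%E.
by field; rewrite PBA_neq0 gt_eqF.
Qed.

Lemma condPr_ltE (B A : set T) (t : R) : measurable (A `&` B) -> 0 < fine (P B) ->
  (condPr P B A < t) = (P (A `&` B) < (t * fine (P B))%:E)%E.
Proof.
move=> mAB PB_gt0.
by rewrite /condPr -(fineK (fin_num_measure P _ mAB)) lte_fin ltr_pdivrMr.
Qed.

Lemma measurable_fun_condPr_xsection d1 (T1 : measurableType d1) (A : set (T1 * T)) (B : set T) :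
  measurable A -> measurable B -> measurable_fun setT (fun v => condPr P B (xsection A v)).
Proof.
move=> mA mB; rewrite /condPr.
have xAB v : xsection A v `&` B = xsection (A `&` setT `*` B) v.
  by rewrite setTX xsectionI xsection_preimage_snd.
under eq_fun do rewrite xAB.
apply: measurable_funM => //; apply: measurableT_comp => //.
by apply: measurable_fun_xsection; apply: measurableI => //; exact: measurableX.
Qed.

End conditional_probability.

Section bad_region.
Context (R : realType) (n k : nat) (w : 'I_k -> n.-tuple R) (eps rho : R).
Variable P : probability (n.-tuple R) R.

Definition neg_side : set (n.+1.-tuple R * n.-tuple R) :=
  [set p | dotp p.1 (ext1 p.2) < 0].

Lemma measurable_neg_side : measurable neg_side.
Proof. apply: measurable_ltr_cst; exact: measurable_dotp_ext1. Qed.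

Lemma xsection_neg_side v : xsection neg_side v = [set x | dotp v (ext1 x) < 0].
Proof. by apply/seteqP; split => x; rewrite /xsection /= inE. Qed.

Lemma measurable_negEv : measurable (negEv w).
Proof.
have -> : negEv w = ~` [set x | forall i, 0 < dotp (w i) x].
  apply/seteqP; split => x; rewrite /negEv /fAND /=;
    case: ifPn => [/forallP pos|/forallPn[i /negP neg_i]] //.
  - by move=> /eqP; rewrite gt_eqF // (lt_trans (ltrN10 R) ltr01).
  - by move=> _ pos; apply/neg_i/pos.
apply: measurableC; apply: measurable_forall_ord => i.
apply: measurable_gtr_cst; exact: measurable_dotp.
Qed.

Lemma measurable_Kbad K : measurable K -> measurable (Kbad w eps rho P K).
Proof.
move=> mK; have -> : Kbad w eps rho P K =
    K `&` [set v | condPr P (negEv w) (xsection neg_side v) < thr n k eps rho].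
  by apply/seteqP; split => v; rewrite /Kbad /= xsection_neg_side.
apply: measurableI mK _; apply: measurable_ltr_cst.
exact: measurable_fun_condPr_xsection measurable_neg_side measurable_negEv.
Qed.

Lemma Kbad_Ksub K x :
  Kbad w eps rho P (Ksub K x) = Kbad w eps rho P K `&` [set v | dotp v (ext1 x) < 0].
Proof. by apply/seteqP; split => v /= [[? ?] ?]. Qed.

Definition bad_pairs K := (Kbad w eps rho P K `*` negEv w) `&` neg_side.

Lemma ysection_bad_pairs K x :
  negEv w x -> ysection (bad_pairs K) x = Kbad w eps rho P (Ksub K x).
Proof.
move=> negx; rewrite Kbad_Ksub; apply/seteqP.
by split => v; rewrite /ysection /= inE => -[[]].
Qed.

Lemma xsection_bad_pairs K v : Kbad w eps rho P K v ->
  xsection (bad_pairs K) v = xsection neg_side v `&` negEv w.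
Proof.
move=> Kbv; apply/seteqP.
by split => x; rewrite /xsection /= !inE; [case=> -[_ negx] xv | case=> xv negx].
Qed.

Lemma integral_Kbad_Ksub_le (lam : {measure set (n.+1.-tuple R) -> \bar R}) K D :
  sigma_finite setT lam -> measurable K -> measurable D -> D `<=` negEv w ->
  0 < fine (P (negEv w)) ->
  (\int[P]_(x in D) lam (Kbad w eps rho P (Ksub K x)) <=
   (thr n k eps rho * fine (P (negEv w)))%:E * lam (Kbad w eps rho P K))%E.
Proof.
move=> lam_sf mK mD Dneg PN_gt0.
have mA : measurable (bad_pairs K).
  apply: measurableI measurable_neg_side; apply: measurableX => //.
    exact: measurable_Kbad.
  exact: measurable_negEv.
rewrite (eq_integral (fun x => lam (ysection (bad_pairs K) x))); last first.
  by move=> x /[!inE] /Dneg negx; rewrite ysection_bad_pairs.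
apply: le_trans (ge0_subset_integral P mD measurableT
  (measurable_fun_ysection_sigma_finite lam_sf mA) _ (subsetT D)) _ => //.
apply: integral_ysection_le => //; first exact: measurable_Kbad.
  by move=> [v x] [[]].
move=> v Kbv; rewrite xsection_bad_pairs //; apply/ltW.
rewrite -condPr_ltE //; last first.
  apply: measurableI measurable_negEv.
  by apply: measurable_xsection; exact: measurable_neg_side.
by case: Kbv => _; rewrite xsection_neg_side.
Qed.

End bad_region.

Theorem lemma3p4 (R : realType) (n k : nat) (k_gt0 : (0 < k)%N)
  (P : probability (n.-tuple R) R)
  (w : 'I_k -> n.-tuple R) (eps rho : R)
  (lam : {measure set (n.+1.-tuple R) -> \bar R})
  (K : set (n.+1.-tuple R)) :
  P (~` @sphere R n) = 0%E ->
  (forall i, dotp (w i) (w i) = 1) ->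
  0 < eps < 1 / 2 -> 0 < rho < 1 / 2 ->
  let w1 := w (Ordinal k_gt0) in
  let E1 := [set x : n.-tuple R | dotp w1 x < - rho] in
  0 < condPr P (negEv w) E1 ->
  is_lebesgue lam ->
  convex_body K ->
  ((condPr P (negEv w) E1)%:E *
     condE P (negEv w `&` E1)
       (fun x => lam (Kbad w eps rho P (Ksub K x))) <=
   (thr n k eps rho)%:E * lam (Kbad w eps rho P K))%E.
Proof.
move=> _ _ _ _ w1 E1 Pr_gt0 /is_lebesgue_sigma_finite lam_sf [_ _ /closed_set_measurable mK _].
have PN_gt0 := condPr_gt0_Pr Pr_gt0.
have mE1 : measurable E1 by apply: measurable_ltr_cst; exact: measurable_dotp.
rewrite condPr_mul_condE //.
have := integral_Kbad_Ksub_le eps rho lam_sf mK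
  (measurableI _ _ (measurable_negEv w) mE1) (@subIsetl _ _ E1) PN_gt0.
move=> /(lee_wpmul2l (_ : 0 <= ((fine (P (negEv w)))^-1)%:E)%E) bound.
apply: le_trans (bound _) _; first by rewrite lee_fin invr_ge0 ltW.
by rewrite muleA -EFinM mulrCA mulVf ?mulr1 ?gt_eqF.
Qed.
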